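(* Let $v\in\mathbb{R}^J$ and let $\mathscr{P}_2(v)=\inf\{\alpha\in\mathbb{R}\mid v+\alpha\mathbf{1}\in R(Cx+Qy),\ (x,y)\in\mathcal{X}\}$. Then $$\mathscr{P}_2(v)=\sup_{\mu\in\mathbb{M}_1^J,\ \lambda\in\mathbb{L}^M,\ \gamma\in\mathbb{R}^J_+}\Big\{\sum_{i\in\Omega}f_i(\mu_i,\lambda_i,\gamma)-\gamma^{\mathsf T}v-\beta(\mu,\gamma)\ \Big|\ \gamma^{\mathsf T}\mathbf{1}=1,\ \mathbb{E}[\lambda]=0\Big\}$$ $$\qquad=\sup_{m\in\mathbb{M}_f^J,\ \lambda\in\mathbb{L}^M}\Big\{\sum_{i\in\Omega}\tilde f_i(m_i,\lambda_i)-\sum_{i\in\Omega}m_i^{\mathsf T}v-\tilde\beta(m)\ \Big|\ \sum_{i\in\Omega}m_i^{\mathsf T}\mathbf{1}=1,\ \mathbb{E}[\lambda]=0\Big\}.$$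
   Context: Probability space: $\Omega=\{1,\dots,I\}$, $I\ge 2$, with probabilities $p_i>0$, $\sum_{i\in\Omega}p_i=1$. For an integer $J\ge1$, $\mathbb{L}^J$ denotes the set of random vectors $u:\Omega\to\mathbb{R}^J$, identified with tuples $(u_1,\dots,u_I)$, $u_i\in\mathbb{R}^J$; $\mathbb{L}^{J\times N}$ denotes random $J\times N$ matrices with realizations $Q_1,\dots,Q_I$; $\mathbb{L}^N_+$ the random vectors with nonnegative components; $\mathbb{E}[u]=\sum_{i}p_iu_i$. $u\le v$ means $u_i^j\le v_i^j$ for all $i,j$. $\mathbf{1}=(1,\dots,1)^{\mathsf T}\in\mathbb{R}^J$. A multivariate convex risk measure is a map $R:\mathbb{L}^J\to 2^{\mathbb{R}^J}$ such that: (A1) $u\le v$ implies $R(u)\supseteq R(v)$; (A2) $R(u+z)=R(u)+z$ for all $z\in\mathbb{R}^J$; (A3) $R(u)\notin\{\emptyset,\mathbb{R}^J\}$; (A4) $R(\gamma u+(1-\gamma)v)\supseteq\gamma R(u)+(1-\gamma)R(v)$ for $\gamma\in(0,1)$; (A5) the acceptance set $\mathcal{A}=\{u\in\mathbb{L}^J\mid 0\in R(u)\}$ is closed. $\mathbb{M}_1^J$ denotes the set of $J$-tuples $\mu=(\mu^1,\dots,\mu^J)$ of probability measures on $\Omega$, with $\mu_i=(\mu_i^1,\dots,\mu_i^J)^{\mathsf T}$, and $\mathbb{E}^\mu[u]=\sum_{i\in\Omega}\mu_i\cdot u_i$, where $\cdot$ is the componentwise (Hadamard) product. $\mathbb{M}_f^J$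 denotes the set of $J$-tuples $m=(m^1,\dots,m^J)$ of finite (nonnegative) measures on $\Omega$, with $m_i=(m_i^1,\dots,m_i^J)^{\mathsf T}\in\mathbb{R}^J_+$. The minimal penalty function is $\beta(\mu,w)=\sup_{u\in\mathcal{A}}w^{\mathsf T}\mathbb{E}^\mu[u]$ for $\mu\in\mathbb{M}_1^J$, $w\in\mathbb{R}^J_+\setminus\{0\}$; it is known that $\inf_{z\in R(u)}w^{\mathsf T}z=\sup_{\mu\in\mathbb{M}_1^J}(w^{\mathsf T}\mathbb{E}^\mu[u]-\beta(\mu,w))$. Also $\tilde\beta(m)=\sup_{u\in\mathcal{A}}\sum_{i\in\Omega}m_i^{\mathsf T}u_i$ for $m\in\mathbb{M}_f^J$. Problem data: $A\in\mathbb{R}^{K\times M}$, $b\in\mathbb{R}^K$, $C\in\mathbb{R}^{J\times M}$, random $W\in\mathbb{L}^{L\times N}$, $T\in\mathbb{L}^{L\times M}$, $h\in\mathbb{L}^L$, $Q\in\mathbb{L}^{J\times N}$; $\mathcal{X}=\{(x,y)\in\mathbb{R}^M_+\times\mathbb{L}^N_+\mid Ax=b,\ T_ix+W_iy_i=h_i\ \forall i\in\Omega\}$, assumed nonempty and compact; $Cx+Qy$ has realizations $Cx+Q_iy_i$. For each $i$, $\mathcal{F}_i=\{(x_i,y_i)\in\mathbb{R}^M_+\times\mathbb{R}^N_+\mid Ax_i=b,\ T_ix_i+W_iy_i=h_i\}$, assumed nonempty and compact. For $\mu_i\in\mathbb{R}^J_+$, $\lambda_i\in\mathbb{R}^M$,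 $\gamma\in\mathbb{R}^J_+$: $f_i(\mu_i,\lambda_i,\gamma)=\inf_{(x_i,y_i)\in\mathcal{F}_i}\big(\gamma^{\mathsf T}[\mu_i\cdot(Cx_i+Q_iy_i)]+p_i\lambda_i^{\mathsf T}x_i\big)$, and for $m_i\in\mathbb{R}^J_+$: $\tilde f_i(m_i,\lambda_i)=\inf_{(x_i,y_i)\in\mathcal{F}_i}\big(m_i^{\mathsf T}(Cx_i+Q_iy_i)+p_i\lambda_i^{\mathsf T}x_i\big)$. *)

From mathcomp Require Import all_boot.
From Stdlib Require Import Reals ClassicalEpsilon.

Local Open Scope R_scope.

Definition rsum {n : nat} (F : 'I_n -> R) : R := \big[Rplus/0]_(i < n) F i.

Definition dot {n : nat} (a b : 'I_n -> R) : R := rsum (fun k => a k * b k).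

Definition matvec {m n : nat} (A : 'I_m -> 'I_n -> R) (x : 'I_n -> R) : 'I_m -> R :=
  fun k => rsum (fun j => A k j * x j).

Inductive ER : Type := ERf (r : R) | ERp | ERn.

Definition ER_le (a b : ER) : Prop :=
  match a, b with
  | ERn, _ => True
  | _, ERp => True
  | ERf x, ERf y => x <= y
  | _, _ => False
  end.

Definition is_sup_ER (S : ER -> Prop) (s : ER) : Prop :=
  (forall y, S y -> ER_le y s) /\ (forall z, (forall y, S y -> ER_le y z) -> ER_le s z).

Definition is_inf_ER (S : ER -> Prop) (s : ER) : Prop :=
  (forall y, S y -> ER_le s y) /\ (forall z, (forall y, S y -> ER_le z y) -> ER_le z s).

(* the supremum / infimum in [-oo,+oo] (they always exist; chosen by epsilon) *)
Definition ER_sup (S : ER -> Prop) : ER := epsilon (inhabits ERp) (is_sup_ER S).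
Definition ER_inf (S : ER -> Prop) : ER := epsilon (inhabits ERp) (is_inf_ER S).

(* addition; the convention for +oo + -oo is irrelevant for the theorem
   (it never occurs under the standing assumptions) *)
Definition ER_plus (a b : ER) : ER :=
  match a, b with
  | ERf x, ERf y => ERf (x + y)
  | ERn, _ | _, ERn => ERn
  | _, _ => ERp
  end.

Definition ER_opp (a : ER) : ER :=
  match a with ERf x => ERf (- x) | ERp => ERn | ERn => ERp end.

Definition ER_sum {n : nat} (F : 'I_n -> ER) : ER := \big[ER_plus/ERf 0]_(i < n) F i.

Definition closed_set {T : Type} (S : (T -> R) -> Prop) : Prop :=
  forall (u : nat -> T -> R) (l : T -> R),
    (forall k, S (u k)) -> (forall t, Un_cv (fun k => u k t) (l t)) -> S l.

Definition bounded_set {T : Type} (S : (T -> R) -> Prop) : Prop :=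
  exists B : R, forall f, S f -> forall t, Rabs (f t) <= B.

(* for T finite, closed and bounded = compact (Heine-Borel) *)
Definition compact_set {T : Type} (S : (T -> R) -> Prop) : Prop :=
  closed_set S /\ bounded_set S.

(* ---------- multivariate convex risk measures ----------
   random vectors u in L^J : 'I_I -> 'I_J -> R  (u i j = u_i^j)
   rho u : set of vectors in R^J, as a predicate. *)
Definition is_mv_convex_risk_measure {I J : nat}
  (rho : ('I_I -> 'I_J -> R) -> ('I_J -> R) -> Prop) : Prop :=
  (forall u v, (forall i j, u i j <= v i j) -> forall z, rho v z -> rho u z) /\
  (forall u (z w : 'I_J -> R),
     rho (fun i j => u i j + z j) w <-> exists w', rho u w' /\ forall j, w j = w' j + z j) /\
  (forall u, (exists z, rho u z) /\ (exists z, ~ rho u z)) /\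
  (forall u v g, 0 < g < 1 -> forall z1 z2, rho u z1 -> rho v z2 ->
     rho (fun i j => g * u i j + (1 - g) * v i j) (fun j => g * z1 j + (1 - g) * z2 j)) /\
  closed_set (fun f : 'I_I * 'I_J -> R => rho (fun i j => f (i, j)) (fun _ => 0)).

Definition acceptance {I J : nat} (rho : ('I_I -> 'I_J -> R) -> ('I_J -> R) -> Prop)
  (u : 'I_I -> 'I_J -> R) : Prop := rho u (fun _ => 0).

(* mu in M_1^J : mu i j = mu^j({i}) ; each mu^j a probability measure on Omega *)
Definition in_M1 {I J : nat} (mu : 'I_I -> 'I_J -> R) : Prop :=
  (forall i j, 0 <= mu i j) /\ (forall j, rsum (fun i => mu i j) = 1).

Definition in_Mf {I J : nat} (m : 'I_I -> 'I_J -> R) : Prop :=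
  forall i j, 0 <= m i j.

Definition beta {I J : nat} (rho : ('I_I -> 'I_J -> R) -> ('I_J -> R) -> Prop)
  (mu : 'I_I -> 'I_J -> R) (w : 'I_J -> R) : ER :=
  ER_sup (fun e => exists u, acceptance rho u /\
            e = ERf (dot w (fun j => rsum (fun i => mu i j * u i j)))).

Definition beta_t {I J : nat} (rho : ('I_I -> 'I_J -> R) -> ('I_J -> R) -> Prop)
  (m : 'I_I -> 'I_J -> R) : ER :=
  ER_sup (fun e => exists u, acceptance rho u /\ e = ERf (rsum (fun i => dot (m i) (u i)))).

Definition inX {I M N K L : nat} (A : 'I_K -> 'I_M -> R) (b : 'I_K -> R)
  (W : 'I_I -> 'I_L -> 'I_N -> R) (T : 'I_I -> 'I_L -> 'I_M -> R) (h : 'I_I -> 'I_L -> R)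
  (x : 'I_M -> R) (y : 'I_I -> 'I_N -> R) : Prop :=
  (forall k, 0 <= x k) /\ (forall i n, 0 <= y i n) /\
  (forall k, matvec A x k = b k) /\
  (forall i l, matvec (T i) x l + matvec (W i) (y i) l = h i l).

Definition inF {I M N K L : nat} (A : 'I_K -> 'I_M -> R) (b : 'I_K -> R)
  (W : 'I_I -> 'I_L -> 'I_N -> R) (T : 'I_I -> 'I_L -> 'I_M -> R) (h : 'I_I -> 'I_L -> R)
  (i : 'I_I) (x : 'I_M -> R) (y : 'I_N -> R) : Prop :=
  (forall k, 0 <= x k) /\ (forall n, 0 <= y n) /\
  (forall k, matvec A x k = b k) /\
  (forall l, matvec (T i) x l + matvec (W i) y l = h i l).

Definition f_i {I J M N K L : nat} (p : 'I_I -> R) (A : 'I_K -> 'I_M -> R) (b : 'I_K -> R)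
  (C : 'I_J -> 'I_M -> R)
  (W : 'I_I -> 'I_L -> 'I_N -> R) (T : 'I_I -> 'I_L -> 'I_M -> R) (h : 'I_I -> 'I_L -> R)
  (Q : 'I_I -> 'I_J -> 'I_N -> R)
  (i : 'I_I) (mui : 'I_J -> R) (lami : 'I_M -> R) (gam : 'I_J -> R) : ER :=
  ER_inf (fun e => exists x y, inF A b W T h i x y /\
     e = ERf (dot gam (fun j => mui j * (matvec C x j + matvec (Q i) y j))
              + p i * dot lami x)).

Definition ft_i {I J M N K L : nat} (p : 'I_I -> R) (A : 'I_K -> 'I_M -> R) (b : 'I_K -> R)
  (C : 'I_J -> 'I_M -> R)
  (W : 'I_I -> 'I_L -> 'I_N -> R) (T : 'I_I -> 'I_L -> 'I_M -> R) (h : 'I_I -> 'I_L -> R)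
  (Q : 'I_I -> 'I_J -> 'I_N -> R)
  (i : 'I_I) (mi : 'I_J -> R) (lami : 'I_M -> R) : ER :=
  ER_inf (fun e => exists x y, inF A b W T h i x y /\
     e = ERf (dot mi (fun j => matvec C x j + matvec (Q i) y j) + p i * dot lami x)).

Definition P2_set {I J M N K L : nat} (A : 'I_K -> 'I_M -> R) (b : 'I_K -> R)
  (C : 'I_J -> 'I_M -> R)
  (W : 'I_I -> 'I_L -> 'I_N -> R) (T : 'I_I -> 'I_L -> 'I_M -> R) (h : 'I_I -> 'I_L -> R)
  (Q : 'I_I -> 'I_J -> 'I_N -> R)
  (rho : ('I_I -> 'I_J -> R) -> ('I_J -> R) -> Prop) (v : 'I_J -> R) : ER -> Prop :=
  fun e => exists (alpha : R) x y, inX A b W T h x y /\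
     rho (fun i j => matvec C x j + matvec (Q i) (y i) j) (fun j => v j + alpha) /\
     e = ERf alpha.

Definition D1_set {I J M N K L : nat} (p : 'I_I -> R) (A : 'I_K -> 'I_M -> R) (b : 'I_K -> R)
  (C : 'I_J -> 'I_M -> R)
  (W : 'I_I -> 'I_L -> 'I_N -> R) (T : 'I_I -> 'I_L -> 'I_M -> R) (h : 'I_I -> 'I_L -> R)
  (Q : 'I_I -> 'I_J -> 'I_N -> R)
  (rho : ('I_I -> 'I_J -> R) -> ('I_J -> R) -> Prop) (v : 'I_J -> R) : ER -> Prop :=
  fun e => exists (mu : 'I_I -> 'I_J -> R) (lam : 'I_I -> 'I_M -> R) (gam : 'I_J -> R),
     in_M1 mu /\ (forall j, 0 <= gam j) /\ rsum gam = 1 /\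
     (forall k, rsum (fun i => p i * lam i k) = 0) /\
     e = ER_plus (ER_plus (ER_sum (fun i => f_i p A b C W T h Q i (mu i) (lam i) gam))
                          (ERf (- dot gam v)))
                 (ER_opp (beta rho mu gam)).

Definition D2_set {I J M N K L : nat} (p : 'I_I -> R) (A : 'I_K -> 'I_M -> R) (b : 'I_K -> R)
  (C : 'I_J -> 'I_M -> R)
  (W : 'I_I -> 'I_L -> 'I_N -> R) (T : 'I_I -> 'I_L -> 'I_M -> R) (h : 'I_I -> 'I_L -> R)
  (Q : 'I_I -> 'I_J -> 'I_N -> R)
  (rho : ('I_I -> 'I_J -> R) -> ('I_J -> R) -> Prop) (v : 'I_J -> R) : ER -> Prop :=
  fun e => exists (m : 'I_I -> 'I_J -> R) (lam : 'I_I -> 'I_M -> R),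
     in_Mf m /\ rsum (fun i => rsum (m i)) = 1 /\
     (forall k, rsum (fun i => p i * lam i k) = 0) /\
     e = ER_plus (ER_plus (ER_sum (fun i => ft_i p A b C W T h Q i (m i) (lam i)))
                          (ERf (- rsum (fun i => dot (m i) v))))
                 (ER_opp (beta_t rho m)).

(* Weak duality: an acceptable position [Cx + Qy - (v + al)] plugged into the dual
   objective returns exactly [al], since nonanticipativity of [lam] kills the
   first-stage terms and [m] has total mass one.

   Strong duality: let [P] be the primal value and [eps > 0].  The set [K] of all
   [(u - (Cx_i + Q_i y_i) + v + al, x_i - E[x], al)] with [(x_i, y_i) in F_i],
   [u] acceptable and [al] real is convex, and it stays at positive distance from
   [(0, 0, P - eps)]: otherwise compactness of the [F_i] and closedness of the
   acceptance set produce a feasible point of level [P - eps].  A hyperplane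
   strictly separating the two has nonpositive slack coefficients summing to minus
   its level coefficient, which is positive; dividing by it yields a finite measure
   [m] of mass one and a nonanticipative [lam] whose dual value exceeds [P - eps].

   The first dual problem is the second one rewritten through [m = gam * mu]. *)

From mathcomp Require Import all_boot zify.
From HB Require Import structures.
From Stdlib Require Import Reals Lra Psatz Lia ZArith.
From Stdlib Require Import Classical ClassicalEpsilon FunctionalExtensionality PropExtensionality.
Local Open Scope R_scope.

Lemma Rplus_assoc_law : associative Rplus.
Proof. by move=> x y z; rewrite Rplus_assoc. Qed.

HB.instance Definition _ :=
  Monoid.isComLaw.Build R 0 Rplus Rplus_assoc_law Rplus_comm Rplus_0_l.
HB.instance Definition _ := Monoid.isMulLaw.Build R 0 Rmult Rmult_0_l Rmult_0_r.
HB.instance Definition _ :=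
  Monoid.isAddLaw.Build R Rmult Rplus Rmult_plus_distr_r Rmult_plus_distr_l.

Definition fsum {T : finType} (F : T -> R) : R := \big[Rplus/0]_(t : T) F t.

Lemma rsum_fsum n (F : 'I_n -> R) : rsum F = fsum F.
Proof. by []. Qed.

Section FiniteSums.
Variable T : finType.
Implicit Types F G : T -> R.

Lemma fsum_ext F G : (forall t, F t = G t) -> fsum F = fsum G.
Proof. by move=> H; apply: eq_bigr => t _; apply: H. Qed.

Lemma fsum0 : fsum (fun _ : T => 0) = 0.
Proof. exact: big1. Qed.

Lemma fsum_zero F : (forall t, F t = 0) -> fsum F = 0.
Proof. by move=> H; rewrite -fsum0; apply: fsum_ext. Qed.

Lemma fsum_add F G : fsum (fun t => F t + G t) = fsum F + fsum G.
Proof. exact: big_split. Qed.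

Lemma fsum_scale c F : fsum (fun t => c * F t) = c * fsum F.
Proof. by rewrite /fsum big_distrr. Qed.

Lemma fsum_sub F G : fsum (fun t => F t - G t) = fsum F - fsum G.
Proof.
have -> : fsum F - fsum G = fsum F + -1 * fsum G by ring.
by rewrite -fsum_scale -fsum_add; apply: fsum_ext => t; ring.
Qed.

Lemma fsum_le F G : (forall t, F t <= G t) -> fsum F <= fsum G.
Proof.
move=> H; apply: (big_ind2 (fun x y => x <= y)) => [|x1 x2 y1 y2|t _]; rewrite ?H //; lra.
Qed.

Lemma fsum_ge0 F : (forall t, 0 <= F t) -> 0 <= fsum F.
Proof. by move=> H; rewrite -fsum0; apply: fsum_le. Qed.

Lemma fsum_single F t0 : (forall t, t <> t0 -> F t = 0) -> fsum F = F t0.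
Proof.
move=> H; rewrite /fsum (bigD1 t0) //= big1 ?Rplus_0_r //.
by move=> t /eqP Ht; apply: H.
Qed.

Lemma fsum_term_le F t0 : (forall t, 0 <= F t) -> F t0 <= fsum F.
Proof.
move=> H; rewrite /fsum (bigD1 t0) //=.
have : 0 <= \big[Rplus/0]_(t | t != t0) F t.
  by apply: (big_ind (fun x => 0 <= x)) => // [|x y]; lra.
lra.
Qed.

Lemma fsum_eq0 F : (forall t, 0 <= F t) -> fsum F = 0 -> forall t, F t = 0.
Proof. by move=> H H0 t; have := fsum_term_le F t H; have := H t; lra. Qed.

Lemma fsum_abs_le F : Rabs (fsum F) <= fsum (fun t => Rabs (F t)).
Proof.
apply: (big_ind2 (fun x y => Rabs x <= y)) => [|x1 x2 y1 y2|t _].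
- by rewrite Rabs_R0; lra.
- by have := Rabs_triang x1 y1; lra.
- exact: Rle_refl.
Qed.

Lemma fsum_mul_abs_le (c z Z : T -> R) : (forall t, Rabs (z t) <= Z t) ->
  Rabs (fsum (fun t => c t * z t)) <= fsum (fun t => Rabs (c t) * Z t).
Proof.
move=> H; apply: Rle_trans (fsum_abs_le _) _; apply: fsum_le => t.
by rewrite Rabs_mult; apply: Rmult_le_compat_l; [exact: Rabs_pos | exact: H].
Qed.

Lemma fsum_cv (f : nat -> T -> R) (l : T -> R) :
  (forall t, Un_cv (fun n => f n t) (l t)) -> Un_cv (fun n => fsum (f n)) (fsum l).
Proof.
rewrite /fsum; elim: (index_enum T) => [|t s IH] H.
  rewrite big_nil => e He; exists 0%nat => n _.
  by rewrite big_nil /R_dist Rminus_0_r Rabs_R0.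
rewrite big_cons => e He; have [N HN] := CV_plus _ _ _ _ (H t) (IH H) e He.
by exists N => n Hn; rewrite big_cons; apply: HN.
Qed.

End FiniteSums.

Lemma fsum_sumType (T1 T2 : finType) (F : T1 + T2 -> R) :
  fsum F = fsum (fun a => F (inl a)) + fsum (fun b => F (inr b)).
Proof. exact: big_sumType. Qed.

Lemma fsum_pair (T1 T2 : finType) (F : T1 * T2 -> R) :
  fsum F = fsum (fun a => fsum (fun b => F (a, b))).
Proof. by rewrite /fsum pair_big; apply: eq_bigr => -[]. Qed.

Lemma fsum_exchange (T1 T2 : finType) (F : T1 -> T2 -> R) :
  fsum (fun a => fsum (fun b => F a b)) = fsum (fun b => fsum (fun a => F a b)).
Proof. exact: exchange_big. Qed.

Lemma fsum_unit (F : unit -> R) : fsum F = F tt.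
Proof. by apply: fsum_single => -[]. Qed.

Lemma fsum_affine (T : finType) (F G : T -> R) s :
  fsum (fun t => F t + s * (G t - F t)) = fsum F + s * (fsum G - fsum F).
Proof. by rewrite fsum_add fsum_scale fsum_sub. Qed.

Lemma Rabs_le_sq_add1 x : Rabs x <= x * x + 1.
Proof. by case: (Rcase_abs x) => h; [rewrite Rabs_left | rewrite Rabs_right]; nra. Qed.

Lemma Rabs_lt_of_sq_lt x e : 0 < e -> x * x < e * e -> Rabs x < e.
Proof. by move=> He H; case: (Rcase_abs x) => hx; [rewrite Rabs_left | rewrite Rabs_right]; nra. Qed.

Lemma Ropp_le_Rabs x : - x <= Rabs x.
Proof. by rewrite -Rabs_Ropp; apply: Rle_abs. Qed.

Lemma nonneg_of_perturbation c n : 0 <= n ->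
  (forall s, 0 < s < 1 -> 0 <= 2 * c + s * n) -> 0 <= c.
Proof.
move=> Hn H; apply: Rnot_lt_le => Hc.
pose s := Rmin (1 / 2) (- c / (n + 1)).
have Hs : 0 < s by apply: Rmin_pos; [lra | apply: Rdiv_lt_0_compat; lra].
have Hsn : s * (n + 1) <= - c.
  have -> : - c = - c / (n + 1) * (n + 1) by field; lra.
  by apply: Rmult_le_compat_r; [lra | apply: Rmin_r].
have := H s; have := Rmin_l (1 / 2) (- c / (n + 1)); rewrite -/s; nra.
Qed.

Lemma le_of_forall_scaled_eps x y n : 0 <= n -> (forall e, 0 < e -> x <= y + e * n) -> x <= y.
Proof.
move=> Hn H; apply: Rle_plus_epsilon => e He.
have He' : 0 < e / (n + 1) by apply: Rdiv_lt_0_compat; lra.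
have := H _ He'; have : e / (n + 1) * n <= e.
  apply: (Rmult_le_reg_r (n + 1)); first lra.
  have -> : e / (n + 1) * n * (n + 1) = e * n by field; lra.
  nra.
lra.
Qed.

(** * Sequences and Bolzano-Weierstrass *)

Lemma inv_INR_S_pos n : 0 < / (INR n + 1).
Proof. by apply: Rinv_0_lt_compat; have := pos_INR n; lra. Qed.

Lemma inv_INR_S_le1 n : / (INR n + 1) <= 1.
Proof.
by rewrite -Rinv_1; apply: Rinv_le_contravar; [lra | have := pos_INR n; lra].
Qed.

Lemma inv_INR_S_small e : 0 < e -> exists N : nat, forall n, (N <= n)%coq_nat -> / (INR n + 1) < e.
Proof.
move=> He; have [Hup _] := archimed (/ e).
have Hie : 0 < / e by apply: Rinv_0_lt_compat.
have Hz : (0 <= up (/ e))%Z by apply: le_IZR; lra.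
exists (Z.to_nat (up (/ e))) => n Hn.
have HN : IZR (up (/ e)) <= INR n.
  by rewrite -(Z2Nat.id _ Hz) -INR_IZR_INZ; apply: le_INR; lia.
rewrite -(Rinv_inv e); apply: Rinv_lt_contravar; last lra.
by apply: Rmult_lt_0_compat; have := pos_INR n; lra.
Qed.

Lemma Un_cv_const (c : R) : Un_cv (fun _ => c) c.
Proof. by move=> e He; exists 0%nat => n _; rewrite /R_dist Rminus_diag Rabs_R0. Qed.

Lemma Un_cv_ext (u w : nat -> R) l : (forall n, u n = w n) -> Un_cv u l -> Un_cv w l.
Proof. by move=> E H e /H [N HN]; exists N => n /HN; rewrite E. Qed.

Definition strict_incr (phi : nat -> nat) := forall n, (phi n < phi n.+1)%nat.

Lemma strict_incr_ge phi : strict_incr phi -> forall n, (n <= phi n)%nat.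
Proof. by move=> H; elim=> [|n IH] //; have := H n; lia. Qed.

Lemma strict_incr_comp phi psi :
  strict_incr phi -> strict_incr psi -> strict_incr (fun n => phi (psi n)).
Proof.
move=> Hphi Hpsi n.
have mono : forall k l, (k <= l)%nat -> (phi k <= phi l)%nat.
  move=> k; elim=> [|l IH] Hkl; first by have -> : k = 0%nat by lia.
  by case: (Nat.eq_dec k l.+1) => [->|Hne] //; have := Hphi l; have := IH ltac:(lia); lia.
have := mono (psi n).+1 (psi n.+1) (Hpsi n); have := Hphi (psi n); lia.
Qed.

Lemma Un_cv_subseq (u : nat -> R) l phi :
  strict_incr phi -> Un_cv u l -> Un_cv (fun n => u (phi n)) l.
Proof.
move=> Hphi H e /H [N HN]; exists N => n Hn; apply: HN.
by have := strict_incr_ge phi Hphi n; lia.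
Qed.

Lemma Un_cv_inv_INR_S phi : strict_incr phi -> Un_cv (fun n => / (INR (phi n) + 1)) 0.
Proof.
move=> Hphi; apply: (Un_cv_subseq (fun n => / (INR n + 1))) => // e /inv_INR_S_small [N HN].
exists N => n /HN; rewrite /R_dist Rminus_0_r Rabs_right //.
exact: Rle_ge (Rlt_le _ _ (inv_INR_S_pos n)).
Qed.

Lemma Un_cv_of_dist_le (s : nat -> R) c phi : strict_incr phi ->
  (forall n, Rabs (s n - c) < / (INR (phi n) + 1)) -> Un_cv s c.
Proof.
move=> Hphi H e He; have [N HN] := Un_cv_inv_INR_S phi Hphi e He.
exists N => n /HN; rewrite /R_dist Rminus_0_r Rabs_right.
  by have := H n; lra.
exact: Rle_ge (Rlt_le _ _ (inv_INR_S_pos _)).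
Qed.

Lemma bolzano_weierstrass_R (u : nat -> R) B : (forall n, Rabs (u n) <= B) ->
  exists phi, strict_incr phi /\ exists l, Un_cv (fun n => u (phi n)) l.
Proof.
move=> Hb.
have [l Hl] : exists l, ValAdh u l.
  apply: (Bolzano_Weierstrass u (fun c => -B <= c <= B) (compact_P3 (-B) B)).
  by move=> n; have := Hb n; split_Rabs; lra.
have Hnear : forall Nk : nat * nat,
    exists n, (Nk.1 <= n)%nat /\ Rabs (u n - l) < / (INR Nk.2 + 1).
  move=> [N k].
  have Hnb : neighbourhood (fun y => Rabs (y - l) < / (INR k + 1)) l.
    by exists (mkposreal _ (inv_INR_S_pos k)) => y Hy; exact: Hy.
  have [n [Hn1 Hn2]] := Hl _ N Hnb.
  by exists n; split => /=; [lia | exact: Hn2].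
have [g Hg] := choice _ Hnear.
pose phi := fix phi n := if n is n'.+1 then g ((phi n').+1, n) else g (0, 0)%nat.
exists phi; split.
  by move=> n /=; have [H1 _] := Hg ((phi n).+1, n.+1); simpl in H1; lia.
exists l; apply: (Un_cv_of_dist_le _ _ (fun n => n)) => // n.
case: n => [|n]; first exact: (Hg (0, 0)%nat).2.
exact: (Hg ((phi n).+1, n.+1)).2.
Qed.

Lemma bolzano_weierstrass_fin (T : finType) (f : nat -> T -> R) B :
  (forall n t, Rabs (f n t) <= B) ->
  exists phi, strict_incr phi /\
    exists l : T -> R, forall t, Un_cv (fun n => f (phi n) t) (l t).
Proof.
move=> Hb.
have H : forall s : seq T, exists phi, strict_incr phi /\
    forall t, t \in s -> exists l, Un_cv (fun n => f (phi n) t) l.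
  elim=> [|t s [phi [Hphi IH]]].
    by exists (fun n => n); split => // n /=; lia.
  have [psi [Hpsi [l Hl]]] := bolzano_weierstrass_R (fun n => f (phi n) t) B (fun n => Hb _ _).
  exists (fun n => phi (psi n)); split; first exact: strict_incr_comp.
  move=> t'; rewrite in_cons => /orP [/eqP -> | Ht']; first by exists l.
  have [l' Hl'] := IH t' Ht'; exists l'.
  exact: (Un_cv_subseq (fun n => f (phi n) t') l' psi Hpsi Hl').
have [phi [Hphi Hl]] := H (index_enum T).
have [l Hl'] := choice _ (fun t => Hl t (mem_index_enum t)).
by exists phi; split => //; exists l.
Qed.

(** * Separating a convex set from a point *)

Definition inner {T : finType} (a b : T -> R) : R := fsum (fun t => a t * b t).
Definition sqnorm {T : finType} (a : T -> R) : R := inner a a.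

Lemma sqnorm_ge0 (T : finType) (a : T -> R) : 0 <= sqnorm a.
Proof. by apply: fsum_ge0 => t; nra. Qed.

Lemma sq_le_sqnorm (T : finType) (a : T -> R) t : a t * a t <= sqnorm a.
Proof. by apply: (fsum_term_le _ (fun t => a t * a t)) => s; nra. Qed.

Lemma inner_addr_scale (T : finType) (a k e : T -> R) s :
  inner a (fun t => k t + s * e t) = inner a k + s * inner a e.
Proof. by rewrite /inner -fsum_scale -fsum_add; apply: fsum_ext => t; ring. Qed.

Lemma sqnorm_add_scale (T : finType) (a b : T -> R) s :
  sqnorm (fun t => a t + s * b t) = sqnorm a + s * (2 * inner a b + s * sqnorm b).
Proof.
rewrite /sqnorm /inner -!fsum_scale -fsum_add -fsum_scale -fsum_add.
by apply: fsum_ext => t; ring.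
Qed.

Lemma sqnorm_cv (T : finType) (f : nat -> T -> R) (l : T -> R) :
  (forall t, Un_cv (fun n => f n t) (l t)) -> Un_cv (fun n => sqnorm (f n)) (sqnorm l).
Proof. by move=> H; apply: fsum_cv => t; apply: CV_mult. Qed.

Section Separation.
Variables (T : finType) (S : (T -> R) -> Prop) (pt : T -> R) (d : R).
Hypothesis S_convex : forall k1 k2 s, S k1 -> S k2 -> 0 < s < 1 ->
  S (fun t => k1 t + s * (k2 t - k1 t)).
Hypothesis S_nonempty : exists k, S k.
Hypothesis d_gt0 : 0 < d.
Hypothesis S_far : forall k, S k -> d <= sqnorm (fun t => k t - pt t).

Local Notation dist2 k := (sqnorm (fun t => k t - pt t)).

Lemma minimizing_seq : exists D (kk : nat -> T -> R), d <= D /\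
  (forall k, S k -> D <= dist2 k) /\
  (forall n, S (kk n) /\ dist2 (kk n) <= D + / (INR n + 1)).
Proof.
have [k0 Hk0] := S_nonempty.
pose E := fun r => exists k, S k /\ r = - dist2 k.
have [m [Hub Hlub]] : {m | is_lub E m}.
  apply: completeness; last by exists (- dist2 k0), k0.
  by exists (- d) => r [k [Hk ->]]; have := S_far k Hk; lra.
have Hmd : m <= - d by apply: Hlub => r [k [Hk ->]]; have := S_far k Hk; lra.
have HD : forall k, S k -> - m <= dist2 k.
  by move=> k Hk; have := Hub _ (ex_intro _ k (conj Hk erefl)); lra.
have Hnear : forall n : nat, exists k, S k /\ dist2 k <= - m + / (INR n + 1).
  move=> n; apply: NNPP => Hn.
  suff : m <= m - / (INR n + 1) by have := inv_INR_S_pos n; lra.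
  apply: Hlub => r [k [Hk ->]].
  suff : ~ dist2 k <= - m + / (INR n + 1) by lra.
  by move=> Hle; apply: Hn; exists k.
have [kk Hkk] := choice _ Hnear.
by exists (- m), kk; split; [lra | split].
Qed.

Lemma minimizing_seq_bounded D (kk : nat -> T -> R) :
  (forall n, dist2 (kk n) <= D + / (INR n + 1)) ->
  exists B, forall n t, Rabs (kk n t) <= B.
Proof.
move=> Hkk; exists (fsum (fun t => Rabs (pt t)) + D + 2) => n t.
have H1 := sq_le_sqnorm _ (fun t => kk n t - pt t) t; simpl in H1.
have H2 : Rabs (pt t) <= fsum (fun t => Rabs (pt t)).
  by apply: (fsum_term_le _ (fun t => Rabs (pt t))) => s; apply: Rabs_pos.
have H3 := Rabs_le_sq_add1 (kk n t - pt t).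
have H4 := Rabs_triang_inv (kk n t) (pt t).
have := Hkk n; have := inv_INR_S_le1 n; lra.
Qed.

Section NearestPoint.
Variables (D : R) (kk : nat -> T -> R) (phi : nat -> nat) (q : T -> R).
Hypothesis D_lb : forall k, S k -> D <= dist2 k.
Hypothesis kk_in : forall n, S (kk n).
Hypothesis kk_min : forall n, dist2 (kk n) <= D + / (INR n + 1).
Hypothesis phi_incr : strict_incr phi.
Hypothesis kk_cv : forall t, Un_cv (fun n => kk (phi n) t) (q t).

Let kk_pt_cv t : Un_cv (fun n => kk (phi n) t - pt t) (q t - pt t).
Proof. exact: CV_minus (kk_cv t) (Un_cv_const _). Qed.

Lemma nearest_point_dist : D <= dist2 q.
Proof.
apply: (Rle_cv_lim (Un := fun _ => D) (Vn := fun n => dist2 (kk (phi n)))).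
- by move=> n; apply: D_lb.
- exact: Un_cv_const.
- exact: sqnorm_cv kk_pt_cv.
Qed.

Lemma nearest_point_variational k : S k ->
  0 <= inner (fun t => q t - pt t) (fun t => k t - q t).
Proof.
move=> Hk; set a := fun t => q t - pt t; set b := fun t => k t - q t.
apply: (nonneg_of_perturbation _ _ (sqnorm_ge0 _ b)) => s Hs.
(* The segment from [kk (phi n)] towards [k] lies in [S], so the squared distance
   along it stays above [D]; letting [n -> oo] gives [2 <a, b> + s |b|^2 >= 0]. *)
pose w n := dist2 (fun t => kk (phi n) t + s * (k t - kk (phi n) t)) - dist2 (kk (phi n)).
have Hw : forall n, - / (INR (phi n) + 1) <= w n.
  move=> n; have := D_lb _ (S_convex _ _ s (kk_in (phi n)) Hk Hs).
  have := kk_min (phi n); rewrite /w; lra.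
have Hwl : Un_cv w (sqnorm (fun t => a t + s * b t) - sqnorm a).
  apply: CV_minus; last exact: sqnorm_cv kk_pt_cv.
  apply: (Un_cv_ext _ _ _ (fun n => erefl)); apply: sqnorm_cv => t.
  have Hb : Un_cv (fun n => k t - kk (phi n) t) (b t) by apply: CV_minus (Un_cv_const _) (kk_cv t).
  apply: (Un_cv_ext (fun n => (kk (phi n) t - pt t) + s * (k t - kk (phi n) t))).
    by move=> n; ring.
  exact: CV_plus (kk_pt_cv t) (CV_mult _ _ _ _ (Un_cv_const s) Hb).
have := Rle_cv_lim Hw (CV_opp _ _ (Un_cv_inv_INR_S phi phi_incr)) Hwl.
rewrite sqnorm_add_scale => Hlim.
have Hsq : 0 <= s * (2 * inner a b + s * sqnorm b) by lra.
by apply: (Rmult_le_reg_l s); lra.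
Qed.

End NearestPoint.

Theorem convex_separation : exists (a : T -> R) (d' : R), 0 < d' /\
  forall k, S k -> inner a pt + d' <= inner a k.
Proof.
have [D [kk [HdD [HD Hkk]]]] := minimizing_seq.
have [B HB] := minimizing_seq_bounded D kk (fun n => (Hkk n).2).
have [phi [Hphi [q Hq]]] := bolzano_weierstrass_fin T kk B HB.
have Hin n := (Hkk n).1; have Hmin n := (Hkk n).2.
exists (fun t => q t - pt t), D; split; first lra.
move=> k Hk; have := nearest_point_variational D kk phi q HD Hin Hmin Hphi Hq k Hk.
have := nearest_point_dist D kk phi q HD Hin Hq.
rewrite /sqnorm /inner.
have -> : fsum (fun t => (q t - pt t) * (k t - q t)) =
  fsum (fun t => (q t - pt t) * k t) - fsum (fun t => (q t - pt t) * pt t)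
  - fsum (fun t => (q t - pt t) * (q t - pt t)).
  by rewrite -!fsum_sub; apply: fsum_ext => t; ring.
lra.
Qed.

End Separation.

Lemma inner_single (T : finType) (a e : T -> R) t0 :
  (forall t, t <> t0 -> e t = 0) -> inner a e = a t0 * e t0.
Proof. by move=> He; apply: fsum_single => t /He ->; ring. Qed.

Lemma separating_direction (T : finType) (S : (T -> R) -> Prop) (a k e : T -> R) c :
  (forall k', S k' -> c <= inner a k') -> (forall s, 0 <= s -> S (fun t => k t + s * e t)) ->
  0 <= inner a e.
Proof.
move=> Hsep Hk; apply: Rnot_lt_le => Hneg.
have := Hsep _ (Hk 0 (Rle_refl 0)); rewrite inner_addr_scale Rmult_0_l Rplus_0_r => Hk0.
pose s := (inner a k - c + 1) / (- inner a e).
have Hs : 0 <= s by apply: Rlt_le; apply: Rdiv_lt_0_compat; lra.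
have := Hsep _ (Hk s Hs); rewrite inner_addr_scale.
have -> : s * inner a e = - (inner a k - c + 1) by rewrite /s; field; lra.
lra.
Qed.

(** * Extended reals and the zero duality gap principle *)

Lemma ER_le_trans x y z : ER_le x y -> ER_le y z -> ER_le x z.
Proof. by case: x => [x||]; case: y => [y||]; case: z => [z||] //=; lra. Qed.

Lemma ex_sup_ER (S : ER -> Prop) : exists s, is_sup_ER S s.
Proof.
case: (classic (S ERp)) => Hp.
  by exists ERp; split => [[]|z /(_ _ Hp)] //; case: z.
case: (classic (exists r, S (ERf r))) => [[r0 Hr0]|Hne]; last first.
  by exists ERn; split => // -[r||] Hy //=; apply: Hne; exists r.
case: (classic (exists B, forall r, S (ERf r) -> r <= B)) => Hb.
  have [c [Hc1 Hc2]] : {c | is_lub (fun r => S (ERf r)) c}.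
    by apply: completeness; last by exists r0.
  exists (ERf c); split => [[r||] Hy //=|[z||] Hz //=]; first exact: Hc1.
    by apply: Hc2 => r /Hz.
  exact: Hz _ Hr0.
exists ERp; split => [[]|[z||] Hz] //=; last exact: Hz _ Hr0.
by apply: Hb; exists z => r /Hz.
Qed.

Lemma ex_inf_ER (S : ER -> Prop) : exists s, is_inf_ER S s.
Proof.
have [s [Hs1 Hs2]] := ex_sup_ER (fun e => S (ER_opp e)).
have opp_le x y : ER_le (ER_opp x) (ER_opp y) <-> ER_le y x.
  by case: x => [x||]; case: y => [y||] //=; split; lra.
have oppK x : ER_opp (ER_opp x) = x by case: x => [x||] //=; rewrite Ropp_involutive.
exists (ER_opp s); split => [y Hy|z Hz].
  by apply/opp_le; rewrite oppK; apply: Hs1; rewrite oppK.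
by rewrite -(oppK z); apply/opp_le; apply: Hs2 => y Hy; rewrite -(oppK y); apply/opp_le; apply: Hz.
Qed.

Lemma ER_sup_spec S : is_sup_ER S (ER_sup S).
Proof. exact: epsilon_spec (ex_sup_ER S). Qed.

Lemma ER_inf_spec S : is_inf_ER S (ER_inf S).
Proof. exact: epsilon_spec (ex_inf_ER S). Qed.

Lemma ER_sup_ext (S1 S2 : ER -> Prop) : (forall e, S1 e <-> S2 e) -> ER_sup S1 = ER_sup S2.
Proof.
by move=> H; congr ER_sup; apply: functional_extensionality => e; apply: propositional_extensionality.
Qed.

Lemma ER_inf_ext (S1 S2 : ER -> Prop) : (forall e, S1 e <-> S2 e) -> ER_inf S1 = ER_inf S2.
Proof.
by move=> H; congr ER_inf; apply: functional_extensionality => e; apply: propositional_extensionality.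
Qed.

Lemma is_sup_ER_equiv (S1 S2 : ER -> Prop) s :
  (forall e, S1 e <-> S2 e) -> is_sup_ER S2 s -> is_sup_ER S1 s.
Proof. by move=> H [H1 H2]; split => [y /H|z Hz]; [apply: H1 | apply: H2 => y /H /Hz]. Qed.

Lemma is_inf_ER_equiv (S1 S2 : ER -> Prop) s :
  (forall e, S1 e <-> S2 e) -> is_inf_ER S2 s -> is_inf_ER S1 s.
Proof. by move=> H [H1 H2]; split => [y /H|z Hz]; [apply: H1 | apply: H2 => y /H /Hz]. Qed.

Section FiniteValued.
Variable S : ER -> Prop.
Hypothesis S_finite : forall e, S e -> exists r, e = ERf r.

Lemma ER_inf_fin y0 r0 : S (ERf y0) -> (forall y, S (ERf y) -> r0 <= y) ->
  exists c, ER_inf S = ERf c /\ (forall y, S (ERf y) -> c <= y) /\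
    (forall e, 0 < e -> exists y, S (ERf y) /\ y < c + e).
Proof.
move=> Hy0 Hr0; have [H1 H2] := ER_inf_spec S.
have Hlow : ER_le (ERf r0) (ER_inf S).
  by apply: H2 => e /[dup] /S_finite [r ->]; apply: Hr0.
have Hup := H1 _ Hy0.
move: Hup Hlow H1 H2; case: (ER_inf S) => [c| |] //= _ _ H1 H2.
exists c; split => //; split => [y /H1 //|e He]; apply: NNPP => Hn.
suff : ER_le (ERf (c + e)) (ERf c) by rewrite /=; lra.
apply: H2 => z /[dup] /S_finite [r ->] Hz /=.
by apply: Rnot_lt_le => Hlt; apply: Hn; exists r.
Qed.

Lemma ER_sup_fin_le y0 r0 : S (ERf y0) -> (forall y, S (ERf y) -> y <= r0) ->
  exists c, ER_sup S = ERf c /\ (forall y, S (ERf y) -> y <= c) /\ c <= r0.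
Proof.
move=> Hy0 Hr0; have [H1 H2] := ER_sup_spec S.
have Hup : ER_le (ER_sup S) (ERf r0).
  by apply: H2 => e /[dup] /S_finite [r ->]; apply: Hr0.
have Hlow := H1 _ Hy0.
move: Hlow Hup H1; case: (ER_sup S) => [c| |] //= _ Hc H1.
by exists c; split => //; split => // y /H1.
Qed.

Lemma ER_sup_cases y0 : S (ERf y0) ->
  ER_sup S = ERp \/ exists c, ER_sup S = ERf c /\ (forall y, S (ERf y) -> y <= c).
Proof.
move=> Hy0; have [H1 _] := ER_sup_spec S; have Hlow := H1 _ Hy0.
move: Hlow H1; case: (ER_sup S) => [c| |] //= _ H1; last by left.
by right; exists c; split => // y /H1.
Qed.

End FiniteValued.

Lemma ER_sum_fin n (c : 'I_n -> R) : ER_sum (fun i => ERf (c i)) = ERf (rsum c).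
Proof. by rewrite /ER_sum /rsum (big_morph ERf (op1 := ER_plus) (id1 := ERf 0)). Qed.

Lemma glb_exists (Pr : R -> Prop) a0 r : Pr a0 -> (forall a, Pr a -> r <= a) ->
  exists P, (forall a, Pr a -> P <= a) /\ (forall z, (forall a, Pr a -> z <= a) -> z <= P).
Proof.
move=> Ha0 Hr.
have [c [Hub Hlub]] : {c | is_lub (fun x => Pr (- x)) c}.
  apply: completeness; last by exists (- a0); rewrite Ropp_involutive.
  by exists (- r) => x /Hr; lra.
exists (- c); split => [a Ha|z Hz].
  by have := Hub (- a); rewrite Ropp_involutive => /(_ Ha); lra.
suff : c <= - z by lra.
by apply: Hlub => x /Hz; lra.
Qed.

Lemma no_duality_gap (Pr : R -> Prop) (Du : ER -> Prop) :
  (exists a, Pr a) ->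
  (forall e a, Du e -> Pr a -> ER_le e (ERf a)) ->
  (forall P eps, (forall a, Pr a -> P <= a) -> 0 < eps ->
     exists e, Du e /\ ER_le (ERf (P - eps)) e) ->
  exists s, is_inf_ER (fun e => exists a, Pr a /\ e = ERf a) s /\ is_sup_ER Du s.
Proof.
move=> [a0 Ha0] weak strong.
have val a : Pr a -> exists a', Pr a' /\ ERf a = ERf a' by exists a.
case: (classic (exists r, forall a, Pr a -> r <= a)) => [[r Hr]|Hunb].
- have [P [HPlb HPglb]] := glb_exists Pr a0 r Ha0 Hr.
  exists (ERf P); split; split.
  + by move=> y [a [Ha ->]] /=; apply: HPlb.
  + move=> [z||] Hz //=; last exact: Hz _ (val _ Ha0).
    by apply: HPglb => a /val /Hz.
  + move=> [r'||] He //=; last exact: weak _ _ He Ha0.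
    by apply: HPglb => a /(weak _ _ He).
  + move=> [z||] Hz //=.
      apply: Rnot_lt_le => Hlt.
      have [e [He Hle]] := strong P ((P - z) / 2) HPlb ltac:(lra).
      by have := ER_le_trans _ _ _ Hle (Hz _ He) => /=; lra.
    have [e [He Hle]] := strong P 1 HPlb Rlt_0_1.
    exact: ER_le_trans Hle (Hz _ He).
- exists ERn; split; split => //.
  + move=> [z||] Hz //=; last exact: Hz _ (val _ Ha0).
    by apply: Hunb; exists z => a /val /Hz.
  + move=> [r||] He //=; last exact: weak _ _ He Ha0.
    by apply: Hunb; exists r => a /(weak _ _ He).
Qed.

Section RiskMeasure.
Variables (I J : nat) (rho : ('I_I -> 'I_J -> R) -> ('I_J -> R) -> Prop).
Hypothesis rho_risk : is_mv_convex_risk_measure rho.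

Lemma rho_ext u1 u2 w1 w2 : (forall i j, u1 i j = u2 i j) -> (forall j, w1 j = w2 j) ->
  rho u1 w1 -> rho u2 w2.
Proof.
move=> Hu Hw.
have -> : u1 = u2 by do 2 (apply: functional_extensionality => ?); apply: Hu.
by have -> : w1 = w2 by apply: functional_extensionality.
Qed.

Lemma rho_translate u w z : rho u w -> rho (fun i j => u i j + z j) (fun j => w j + z j).
Proof. by have [_ [Htr _]] := rho_risk; move=> H; apply/Htr; exists w. Qed.

Lemma rho_iff_acceptance u w : rho u w <-> acceptance rho (fun i j => u i j - w j).
Proof.
split=> H; [move/(rho_translate _ _ (fun j => - w j)): H | move/(rho_translate _ _ w): H];
  by apply: rho_ext => *; ring.
Qed.

Lemma acceptance_mono u u' :
  (forall i j, u i j <= u' i j) -> acceptance rho u' -> acceptance rho u.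
Proof. by have [Hmono _] := rho_risk; move=> H; apply: Hmono. Qed.

Lemma acceptance_convex u1 u2 s : acceptance rho u1 -> acceptance rho u2 -> 0 < s < 1 ->
  acceptance rho (fun i j => u1 i j + s * (u2 i j - u1 i j)).
Proof.
move=> H1 H2 Hs; have [_ [_ [_ [Hconv _]]]] := rho_risk.
have := Hconv u1 u2 (1 - s) ltac:(lra) _ _ H1 H2.
by apply: rho_ext => *; ring.
Qed.

Lemma rho_upward u z z' : rho u z -> (forall j, z j <= z' j) -> rho u z'.
Proof.
move=> /rho_iff_acceptance H Hz; apply/rho_iff_acceptance.
by apply: acceptance_mono H => i j; have := Hz j; lra.
Qed.

Lemma rho_nonempty u : exists z, rho u z.
Proof. by have [_ [_ [Hproper _]]] := rho_risk; case: (Hproper u). Qed.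

Lemma acceptance_nonempty : exists u, acceptance rho u.
Proof.
have [z /rho_iff_acceptance Hz] := rho_nonempty (fun _ _ => 0).
by exists (fun i j => 0 - z j).
Qed.

End RiskMeasure.

Lemma dot_scaled_expectation I J (mu m : 'I_I -> 'I_J -> R) gam u :
  (forall i j, m i j = gam j * mu i j) ->
  dot gam (fun j => rsum (fun i => mu i j * u i j)) = rsum (fun i => dot (m i) (u i)).
Proof.
move=> Hm; rewrite /dot !rsum_fsum.
rewrite (fsum_ext _ _ (fun j => fsum (fun i => gam j * mu i j * u i j))).
  by rewrite fsum_exchange; apply: fsum_ext => i; apply: fsum_ext => j; rewrite Hm.
by move=> j; rewrite rsum_fsum -fsum_scale; apply: fsum_ext => i; ring.
Qed.

Lemma beta_scaled I J rho (mu m : 'I_I -> 'I_J -> R) gam :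
  (forall i j, m i j = gam j * mu i j) -> beta rho mu gam = beta_t rho m.
Proof.
move=> Hm; apply: ER_sup_ext => e.
by split => -[u [Hu ->]]; exists u; rewrite (dot_scaled_expectation _ _ mu m gam u Hm).
Qed.

Lemma dot_scaled_const I J (mu m : 'I_I -> 'I_J -> R) gam w :
  (forall i j, m i j = gam j * mu i j) -> (forall j, rsum (fun i => mu i j) = 1) ->
  dot gam w = rsum (fun i => dot (m i) w).
Proof.
move=> Hm Hmu; rewrite -(dot_scaled_expectation _ _ mu m gam (fun _ j => w j) Hm).
rewrite /dot !rsum_fsum; apply: fsum_ext => j /=.
have := Hmu j; rewrite rsum_fsum => Hs.
transitivity (gam j * (w j * fsum (fun i => mu i j))); first by rewrite Hs; ring.
by rewrite -fsum_scale rsum_fsum; congr (_ * _); apply: fsum_ext => i; ring.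
Qed.

(* Where [gam j = 0] the probability [mu^j] is arbitrary; [q] is used. *)
Lemma finite_measure_decomposition I J (q : 'I_I -> R) (m : 'I_I -> 'I_J -> R) :
  (forall i, 0 < q i) -> rsum q = 1 -> in_Mf m ->
  exists mu gam, in_M1 mu /\ (forall j, 0 <= gam j) /\
    (forall j, gam j = rsum (fun i => m i j)) /\ (forall i j, m i j = gam j * mu i j).
Proof.
move=> Hq0 Hq1 Hm0; pose gam j := rsum (fun i => m i j).
have Hgam j : gam j = rsum (fun i => m i j) by [].
have Hg0 j : 0 <= gam j by apply: fsum_ge0 => i; apply: Hm0.
clearbody gam.
pose mu i j := if Rlt_dec 0 (gam j) then m i j / gam j else q i.
exists mu, gam; split; [split|split => //; split => // i j].
- move=> i j; rewrite /mu; case: Rlt_dec => Hg /=; last exact: Rlt_le.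
  by apply: Rmult_le_pos; [apply: Hm0 | left; apply: Rinv_0_lt_compat].
- move=> j; rewrite /mu; case: Rlt_dec => Hg //=.
  rewrite rsum_fsum (fsum_ext _ _ (fun i => / gam j * m i j)) ?fsum_scale.
    by rewrite -rsum_fsum -Hgam; field; lra.
  by move=> i; rewrite /Rdiv Rmult_comm.
- rewrite /mu; case: Rlt_dec => Hg /=; first by field; lra.
  have Hg' : gam j = 0 by have := Hg0 j; lra.
  have Hs : fsum (fun i => m i j) = 0 by rewrite -rsum_fsum -Hgam.
  by rewrite (fsum_eq0 _ (fun i => m i j) (fun i => Hm0 i j) Hs) Hg'; ring.
Qed.

Lemma matvec_affine m n (A : 'I_m -> 'I_n -> R) x1 x2 s k :
  matvec A (fun t => x1 t + s * (x2 t - x1 t)) k =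
  matvec A x1 k + s * (matvec A x2 k - matvec A x1 k).
Proof. by rewrite /matvec !rsum_fsum -fsum_affine; apply: fsum_ext => t; ring. Qed.

Lemma matvec_cv m n (A : 'I_m -> 'I_n -> R) (xn : nat -> 'I_n -> R) x k :
  (forall t, Un_cv (fun n => xn n t) (x t)) ->
  Un_cv (fun n => matvec A (xn n) k) (matvec A x k).
Proof.
by move=> H; apply: fsum_cv => t; apply: CV_mult; [apply: Un_cv_const | apply: H].
Qed.

Lemma centered_sum_swap I M (p : 'I_I -> R) (a x : 'I_I -> 'I_M -> R) :
  fsum (fun i => fsum (fun k => a i k * (x i k - rsum (fun l => p l * x l k)))) =
  fsum (fun i => fsum (fun k => (a i k - p i * rsum (fun l => a l k)) * x i k)).
Proof.
pose X k := rsum (fun l => p l * x l k); pose Sa k := rsum (fun l => a l k).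
have HX : fsum (fun i => fsum (fun k => a i k * X k)) = fsum (fun k => Sa k * X k).
  rewrite (fsum_exchange _ _ (fun i k => a i k * X k)); apply: fsum_ext => k.
  by rewrite Rmult_comm -fsum_scale; apply: fsum_ext => i; rewrite /X; ring.
have HS : fsum (fun i => fsum (fun k => p i * Sa k * x i k)) = fsum (fun k => Sa k * X k).
  rewrite (fsum_exchange _ _ (fun i k => p i * Sa k * x i k)); apply: fsum_ext => k.
  by rewrite /X rsum_fsum -!fsum_scale; apply: fsum_ext => i; ring.
transitivity (fsum (fun i => fsum (fun k => a i k * x i k)) - fsum (fun k => Sa k * X k)).
  rewrite -HX -fsum_sub; apply: fsum_ext => i; rewrite -fsum_sub.
  by apply: fsum_ext => k; rewrite /X; ring.
rewrite -HS -fsum_sub; apply: fsum_ext => i; rewrite -fsum_sub.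
by apply: fsum_ext => k; rewrite /Sa; ring.
Qed.

Section TwoStage.
Context {I J M N K L : nat}.
Variable p : 'I_I -> R.
Hypothesis p_gt0 : forall i, 0 < p i.
Hypothesis p_sum1 : rsum p = 1.
Variables (A : 'I_K -> 'I_M -> R) (b : 'I_K -> R) (C : 'I_J -> 'I_M -> R)
  (W : 'I_I -> 'I_L -> 'I_N -> R) (T : 'I_I -> 'I_L -> 'I_M -> R)
  (h : 'I_I -> 'I_L -> R) (Q : 'I_I -> 'I_J -> 'I_N -> R)
  (rho : ('I_I -> 'I_J -> R) -> ('I_J -> R) -> Prop).
Hypothesis rho_risk : is_mv_convex_risk_measure rho.
Hypothesis F_nonempty : forall i, exists x y, inF A b W T h i x y.
Hypothesis F_compact : forall i, compact_set (fun f : 'I_M + 'I_N -> R =>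
  inF A b W T h i (fun k => f (inl k)) (fun n => f (inr n))).
Variable v : 'I_J -> R.

Local Notation inF := (inF A b W T h).
Local Notation inX := (inX A b W T h).

Definition outcome (x : 'I_M -> R) (y : 'I_N -> R) (i : 'I_I) (j : 'I_J) : R :=
  matvec C x j + matvec (Q i) y j.

Definition scenario_cost (m : 'I_I -> 'I_J -> R) (lam : 'I_I -> 'I_M -> R) i x y : R :=
  dot (m i) (fun j => outcome x y i j) + p i * dot (lam i) x.

Definition D2val (m : 'I_I -> 'I_J -> R) (lam : 'I_I -> 'I_M -> R) : ER :=
  ER_plus (ER_plus (ER_sum (fun i => ft_i p A b C W T h Q i (m i) (lam i)))
                   (ERf (- rsum (fun i => dot (m i) v))))
          (ER_opp (beta_t rho m)).

Definition feasible_level (al : R) : Prop := exists x y, inX x y /\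
  rho (fun i j => matvec C x j + matvec (Q i) (y i) j) (fun j => v j + al).

Lemma inX_inF x y i : inX x y -> inF i x (y i).
Proof. by move=> [? [? [? ?]]]. Qed.

Lemma inF_bounded i : exists B, forall x y, inF i x y ->
  (forall k, Rabs (x k) <= B) /\ (forall n, Rabs (y n) <= B).
Proof.
have [_ [B HB]] := F_compact i; exists B => x y Hxy.
have := HB (fun s => match s with inl k => x k | inr n => y n end) Hxy.
by move=> Hb; split=> [k|n]; [apply: (Hb (inl k)) | apply: (Hb (inr n))].
Qed.

Lemma scenario_cost_lb m lam i :
  exists r, forall x y, inF i x y -> r <= scenario_cost m lam i x y.
Proof.
have [B HB] := inF_bounded i.
pose G j := fsum (fun k => Rabs (C j k) * B) + fsum (fun n => Rabs (Q i j n) * B).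
exists (- (fsum (fun j => Rabs (m i j) * G j) + Rabs (p i) * fsum (fun k => Rabs (lam i k) * B))).
move=> x y /HB [Hx Hy].
have HG : forall j, Rabs (outcome x y i j) <= G j.
  move=> j; apply: Rle_trans (Rabs_triang _ _) _.
  by apply: Rplus_le_compat; apply: fsum_mul_abs_le.
have H1 : Rabs (dot (m i) (fun j => outcome x y i j)) <= fsum (fun j => Rabs (m i j) * G j).
  exact: fsum_mul_abs_le.
have H2 : Rabs (p i * dot (lam i) x) <= Rabs (p i) * fsum (fun k => Rabs (lam i k) * B).
  rewrite Rabs_mult; apply: Rmult_le_compat_l; first exact: Rabs_pos.
  exact: fsum_mul_abs_le.
rewrite /scenario_cost; have := Ropp_le_Rabs (dot (m i) (fun j => outcome x y i j)).
have := Ropp_le_Rabs (p i * dot (lam i) x); lra.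
Qed.

Lemma ft_i_fin m lam i : exists c,
  ft_i p A b C W T h Q i (m i) (lam i) = ERf c /\
  (forall x y, inF i x y -> c <= scenario_cost m lam i x y) /\
  (forall e, 0 < e -> exists x y, inF i x y /\ scenario_cost m lam i x y < c + e).
Proof.
have [r Hr] := scenario_cost_lb m lam i.
have [x0 [y0 H0]] := F_nonempty i.
pose S e := exists x y, inF i x y /\ e = ERf (scenario_cost m lam i x y).
have Sfin : forall e, S e -> exists r, e = ERf r by move=> e [x [y [_ ->]]]; eexists.
have Sr : forall z, S (ERf z) -> r <= z by move=> z [x [y [Hxy [->]]]]; apply: Hr.
have [c [Hc1 [Hc2 Hc3]]] := ER_inf_fin S Sfin (scenario_cost m lam i x0 y0) r
  (ex_intro _ x0 (ex_intro _ y0 (conj H0 erefl))) Sr.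
exists c; split => //; split => [x y Hxy|e /Hc3 [z [[x [y [Hxy [Ez]]]] Hz]]].
  by apply: Hc2; exists x, y.
by exists x, y; rewrite -Ez.
Qed.

Lemma ER_sum_ft_i m lam (c : 'I_I -> R) :
  (forall i, ft_i p A b C W T h Q i (m i) (lam i) = ERf (c i)) ->
  ER_sum (fun i => ft_i p A b C W T h Q i (m i) (lam i)) = ERf (rsum c).
Proof.
by move=> H; rewrite -ER_sum_fin; congr ER_sum; apply: functional_extensionality.
Qed.

Lemma near_argmin_all m lam (c : 'I_I -> R) e :
  (forall i, exists x y, inF i x y /\ scenario_cost m lam i x y < c i + e) ->
  exists xs ys, forall i, inF i (xs i) (ys i) /\ scenario_cost m lam i (xs i) (ys i) < c i + e.
Proof.
move=> H; have [xy Hxy] := choice (fun i (xy : ('I_M -> R) * ('I_N -> R)) =>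
  inF i xy.1 xy.2 /\ scenario_cost m lam i xy.1 xy.2 < c i + e)
  (fun i => let: ex_intro x (ex_intro y Hi) := H i in ex_intro _ (x, y) Hi).
by exists (fun i => (xy i).1), (fun i => (xy i).2).
Qed.

Lemma nonanticipative_cost_zero (lam : 'I_I -> 'I_M -> R) x :
  (forall k, rsum (fun i => p i * lam i k) = 0) -> rsum (fun i => p i * dot (lam i) x) = 0.
Proof.
move=> Hlam.
transitivity (fsum (fun k => x k * rsum (fun i => p i * lam i k))); last first.
  by apply: fsum_zero => k; rewrite Hlam; ring.
rewrite rsum_fsum (fsum_ext _ _ (fun i => fsum (fun k => p i * lam i k * x k))).
  rewrite fsum_exchange; apply: fsum_ext => k; rewrite rsum_fsum -fsum_scale.
  by apply: fsum_ext => i; ring.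
by move=> i; rewrite /dot rsum_fsum -fsum_scale; apply: fsum_ext => k; ring.
Qed.

(* The [lam]-terms vanish by nonanticipativity and [m] has total mass one. *)
Lemma dual_objective_at_feasible m lam x y al :
  (forall k, rsum (fun i => p i * lam i k) = 0) -> rsum (fun i => rsum (m i)) = 1 ->
  rsum (fun i => scenario_cost m lam i x (y i)) - rsum (fun i => dot (m i) v)
  - rsum (fun i => dot (m i) (fun j => outcome x (y i) i j - (v j + al))) = al.
Proof.
move=> Hlam Hm; rewrite !rsum_fsum -!fsum_sub.
rewrite (fsum_ext _ _ (fun i => p i * dot (lam i) x + al * rsum (m i))).
  by rewrite fsum_add fsum_scale -!rsum_fsum nonanticipative_cost_zero // Hm; ring.
move=> i; rewrite /scenario_cost /dot !rsum_fsum.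
have E : fsum (fun j : 'I_J => m i j * outcome x (y i) i j) - fsum (fun j : 'I_J => m i j * v j)
  - fsum (fun j : 'I_J => m i j * (outcome x (y i) i j - (v j + al))) = al * fsum (m i).
  by rewrite -!fsum_sub -fsum_scale; apply: fsum_ext => j; ring.
lra.
Qed.

Lemma D2val_le_feasible_level m lam al :
  rsum (fun i => rsum (m i)) = 1 -> (forall k, rsum (fun i => p i * lam i k) = 0) ->
  feasible_level al -> ER_le (D2val m lam) (ERf al).
Proof.
move=> Hm Hlam [x [y [HX /(rho_iff_acceptance _ _ _ rho_risk) Hacc]]].
have [c Hc] := choice _ (ft_i_fin m lam).
rewrite /D2val (ER_sum_ft_i m lam c (fun i => (Hc i).1)) /beta_t.
have [u0 Hu0] := acceptance_nonempty _ _ _ rho_risk.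
have [->|[bb [-> Hbb]]] // := ER_sup_cases
  (fun e => exists u, acceptance rho u /\ e = ERf (rsum (fun i => dot (m i) (u i))))
  _ (ex_intro _ u0 (conj Hu0 erefl)).
have H1 : rsum (fun i => dot (m i) (fun j => outcome x (y i) i j - (v j + al))) <= bb.
  exact: Hbb _ (ex_intro _ _ (conj Hacc erefl)).
have H2 : rsum c <= rsum (fun i => scenario_cost m lam i x (y i)).
  by rewrite !rsum_fsum; apply: fsum_le => i; apply: (Hc i).2.1; apply: inX_inF.
have := dual_objective_at_feasible m lam x y al Hlam Hm.
rewrite /=; lra.
Qed.

Lemma D2_le_feasible_level e al :
  D2_set p A b C W T h Q rho v e -> feasible_level al -> ER_le e (ERf al).
Proof.
by move=> [m [lam [_ [Hm [Hlam ->]]]]]; apply: D2val_le_feasible_level.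
Qed.

Lemma feasible_level_exists : (exists x y, inX x y) -> exists al, feasible_level al.
Proof.
move=> [x [y HX]].
have [z Hz] := rho_nonempty _ _ _ rho_risk (fun i j => matvec C x j + matvec (Q i) (y i) j).
exists (fsum (fun j => Rabs (z j - v j))), x, y; split => //.
apply: (rho_upward _ _ _ rho_risk _ _ _ Hz) => j.
have := fsum_term_le _ (fun j => Rabs (z j - v j)) j (fun t => Rabs_pos _).
by have := Rle_abs (z j - v j); lra.
Qed.

Lemma P2_set_iff e :
  P2_set A b C W T h Q rho v e <-> exists al, feasible_level al /\ e = ERf al.
Proof.
split => [[al [x [y [HX [Hr ->]]]]]|[al [[x [y [HX Hr]]] ->]]].
  by exists al; split => //; exists x, y.
by exists al, x, y.
Qed.

Lemma D2val_ge m lam c :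
  (forall xs ys u, (forall i, inF i (xs i) (ys i)) -> acceptance rho u ->
     c <= rsum (fun i => scenario_cost m lam i (xs i) (ys i)) - rsum (fun i => dot (m i) v)
          - rsum (fun i => dot (m i) (u i))) ->
  ER_le (ERf c) (D2val m lam).
Proof.
move=> Hlb; have [cf Hcf] := choice _ (ft_i_fin m lam).
rewrite /D2val (ER_sum_ft_i m lam cf (fun i => (Hcf i).1)) /beta_t.
have [u0 Hu0] := acceptance_nonempty _ _ _ rho_risk.
have Hbound : forall u, acceptance rho u ->
    rsum (fun i => dot (m i) (u i)) <= rsum cf - rsum (fun i => dot (m i) v) - c.
  move=> u Hu; apply: (le_of_forall_scaled_eps _ _ (fsum (fun _ : 'I_I => 1))).
    by apply: fsum_ge0 => _; lra.
  move=> e He; have [xs [ys Hxy]] := near_argmin_all m lam cf e (fun i => (Hcf i).2.2 e He).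
  have := Hlb xs ys u (fun i => (Hxy i).1) Hu.
  have : rsum (fun i => scenario_cost m lam i (xs i) (ys i)) <= rsum cf + e * fsum (fun _ : 'I_I => 1).
    rewrite !rsum_fsum -fsum_scale -fsum_add; apply: fsum_le => i.
    by have := (Hxy i).2; lra.
  lra.
pose Sb e := exists u, acceptance rho u /\ e = ERf (rsum (fun i => dot (m i) (u i))).
have Sfin : forall e, Sb e -> exists r, e = ERf r by move=> e [u [_ ->]]; eexists.
have Sle : forall y, Sb (ERf y) -> y <= rsum cf - rsum (fun i => dot (m i) v) - c.
  by move=> y [u [Hu [->]]]; apply: Hbound.
have [bb [-> [_ Hbb]]] := ER_sup_fin_le Sb Sfin _ _ (ex_intro _ u0 (conj Hu0 erefl)) Sle.
by rewrite /=; lra.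
Qed.

(** * Equivalence of the two dual problems *)

Lemma f_i_scaled mu m gam lam i : (forall j, m i j = gam j * mu i j) ->
  f_i p A b C W T h Q i (mu i) (lam i) gam = ft_i p A b C W T h Q i (m i) (lam i).
Proof.
move=> Hm; apply: ER_inf_ext => e.
have E x y : dot gam (fun j => mu i j * (matvec C x j + matvec (Q i) y j)) =
             dot (m i) (fun j => matvec C x j + matvec (Q i) y j).
  by rewrite /dot !rsum_fsum; apply: fsum_ext => j; rewrite Hm; ring.
by split => -[x [y [Hxy ->]]]; exists x, y; rewrite E.
Qed.

Lemma D1_value_eq mu m gam lam :
  (forall i j, m i j = gam j * mu i j) -> (forall j, rsum (fun i => mu i j) = 1) ->
  ER_plus (ER_plus (ER_sum (fun i => f_i p A b C W T h Q i (mu i) (lam i) gam))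
                   (ERf (- dot gam v)))
          (ER_opp (beta rho mu gam)) = D2val m lam.
Proof.
move=> Hm Hmu; rewrite /D2val (beta_scaled _ _ _ mu m gam Hm) (dot_scaled_const _ _ mu m gam v Hm Hmu).
congr (ER_plus (ER_plus (ER_sum _) _) _); apply: functional_extensionality => i.
exact: f_i_scaled.
Qed.

Lemma D1_iff_D2 e : D1_set p A b C W T h Q rho v e <-> D2_set p A b C W T h Q rho v e.
Proof.
split.
- move=> [mu [lam [gam [[Hmu0 Hmu1] [Hg0 [Hg1 [Hlam ->]]]]]]].
  pose m i j := gam j * mu i j; have Hm : forall i j, m i j = gam j * mu i j by [].
  exists m, lam; split; [|split; [|split]] => //.
  + by move=> i j; apply: Rmult_le_pos.
  + rewrite rsum_fsum (fsum_ext _ _ (fun i => fsum (fun j => gam j * mu i j))) //.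
    rewrite fsum_exchange -Hg1 rsum_fsum; apply: fsum_ext => j.
    by rewrite fsum_scale -rsum_fsum Hmu1 Rmult_1_r.
  + exact: D1_value_eq.
- move=> [m [lam [Hm0 [Hm1 [Hlam ->]]]]].
  have [mu [gam [Hmu [Hg0 [Hgam Hm]]]]] := finite_measure_decomposition _ _ p m p_gt0 p_sum1 Hm0.
  exists mu, lam, gam; split; [|split; [|split; [|split]]] => //.
  + rewrite -Hm1 (rsum_fsum _ gam) (fsum_ext _ _ _ Hgam) rsum_fsum fsum_exchange.
    by apply: fsum_ext.
  + by rewrite (D1_value_eq mu m gam lam Hm Hmu.2).
Qed.

(** * Strong duality *)

Lemma inF_convex i x1 y1 x2 y2 s : inF i x1 y1 -> inF i x2 y2 -> 0 < s < 1 ->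
  inF i (fun t => x1 t + s * (x2 t - x1 t)) (fun t => y1 t + s * (y2 t - y1 t)).
Proof.
move=> [Hx1 [Hy1 [HA1 HT1]]] [Hx2 [Hy2 [HA2 HT2]]] Hs.
split; [|split; [|split]].
- by move=> k; have := Hx1 k; have := Hx2 k; nra.
- by move=> n; have := Hy1 n; have := Hy2 n; nra.
- by move=> k; rewrite matvec_affine HA1 HA2; ring.
- move=> l; rewrite !matvec_affine.
  have affine_add a1 a2 b1 b2 :
    a1 + s * (a2 - a1) + (b1 + s * (b2 - b1)) = a1 + b1 + s * (a2 + b2 - (a1 + b1)).
    by ring.
  by rewrite affine_add HT1 HT2; ring.
Qed.

Definition coord := (('I_I * 'I_J) + ('I_I * 'I_M) + unit)%type.
Definition slack_co i j : coord := inl (inl (i, j)).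
Definition nonantic_co i k : coord := inl (inr (i, k)).
Definition level_co : coord := inr tt.

(* [Kset] is the image of F_1 x ... x F_I x (acceptance set) x R under the affine map
   with three blocks: the acceptability slack [u - outcome + v + al], the
   nonanticipativity residual [x_i - E[x]], and the level [al].  The primal value is
   the least [al] at which [Kset] meets the axis of [target]. *)
Definition Kpoint xs ys u al : coord -> R := fun t =>
  match t with
  | inl (inl (i, j)) => u i j - outcome (xs i) (ys i) i j + v j + al
  | inl (inr (i, k)) => xs i k - rsum (fun l => p l * xs l k)
  | inr _ => al
  end.

Definition Kset (k : coord -> R) : Prop := exists xs ys u al,
  (forall i, inF i (xs i) (ys i)) /\ acceptance rho u /\ k = Kpoint xs ys u al.

Definition target (al : R) : coord -> R := fun t => if t is inr _ then al else 0.

Lemma inner_coord (a k : coord -> R) : inner a k =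
  fsum (fun i => fsum (fun j => a (slack_co i j) * k (slack_co i j))) +
  fsum (fun i => fsum (fun q => a (nonantic_co i q) * k (nonantic_co i q))) +
  a level_co * k level_co.
Proof. by rewrite /inner !fsum_sumType !fsum_pair fsum_unit. Qed.

Lemma inner_target (a : coord -> R) al : inner a (target al) = a level_co * al.
Proof. by apply: inner_single => -[[]|[]]. Qed.

Lemma Kpoint_affine xs1 ys1 u1 al1 xs2 ys2 u2 al2 s :
  Kpoint (fun i k => xs1 i k + s * (xs2 i k - xs1 i k))
         (fun i n => ys1 i n + s * (ys2 i n - ys1 i n))
         (fun i j => u1 i j + s * (u2 i j - u1 i j)) (al1 + s * (al2 - al1)) =
  fun t => Kpoint xs1 ys1 u1 al1 t + s * (Kpoint xs2 ys2 u2 al2 t - Kpoint xs1 ys1 u1 al1 t).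
Proof.
apply: functional_extensionality => -[[[i j]|[i k]]|[]] /=; last by [].
  by rewrite /outcome !matvec_affine; ring.
have -> : rsum (fun l => p l * (xs1 l k + s * (xs2 l k - xs1 l k))) =
  rsum (fun l => p l * xs1 l k) + s * (rsum (fun l => p l * xs2 l k) - rsum (fun l => p l * xs1 l k)).
  by rewrite !rsum_fsum -fsum_affine; apply: fsum_ext => l; ring.
ring.
Qed.

Lemma Kset_convex k1 k2 s : Kset k1 -> Kset k2 -> 0 < s < 1 ->
  Kset (fun t => k1 t + s * (k2 t - k1 t)).
Proof.
move=> [xs1 [ys1 [u1 [al1 [HF1 [Hu1 ->]]]]]] [xs2 [ys2 [u2 [al2 [HF2 [Hu2 ->]]]]]] Hs.
rewrite -Kpoint_affine; do 4 eexists; split; last split; last by [].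
- by move=> i; apply: inF_convex.
- exact: acceptance_convex.
Qed.

Lemma Kset_nonempty : exists k, Kset k.
Proof.
have [xy Hxy] := choice (fun i (xy : ('I_M -> R) * ('I_N -> R)) => inF i xy.1 xy.2)
  (fun i => let: ex_intro x (ex_intro y Hi) := F_nonempty i in ex_intro _ (x, y) Hi).
have [u Hu] := acceptance_nonempty _ _ _ rho_risk.
by exists (Kpoint (fun i => (xy i).1) (fun i => (xy i).2) u 0), (fun i => (xy i).1),
  (fun i => (xy i).2), u, 0.
Qed.

Lemma Kset_target_feasible al : feasible_level al -> Kset (target al).
Proof.
move=> [x [y [HX /(rho_iff_acceptance _ _ _ rho_risk) Hacc]]].
exists (fun _ => x), y, (fun i j => outcome x (y i) i j - (v j + al)), al.
split; first by move=> i; apply: inX_inF.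
split; first exact: Hacc.
apply: functional_extensionality => -[[[i j]|[i k]]|[]] //=; first by rewrite /outcome; ring.
have -> : rsum (fun l => p l * x k) = rsum p * x k.
  by rewrite !rsum_fsum Rmult_comm -fsum_scale; apply: fsum_ext => l; ring.
by rewrite p_sum1; ring.
Qed.

Lemma Kset_seq_witness (ks : nat -> coord -> R) : (forall n, Kset (ks n)) ->
  exists xss yss uu als, forall n, (forall i, inF i (xss n i) (yss n i)) /\
    acceptance rho (uu n) /\ ks n = Kpoint (xss n) (yss n) (uu n) (als n).
Proof.
move=> HK; have [w Hw] := choice (fun n (w : ('I_I -> 'I_M -> R) * ('I_I -> 'I_N -> R)
    * ('I_I -> 'I_J -> R) * R) => (forall i, inF i (w.1.1.1 i) (w.1.1.2 i)) /\
    acceptance rho w.1.2 /\ ks n = Kpoint w.1.1.1 w.1.1.2 w.1.2 w.2)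
  (fun n => let: ex_intro xs (ex_intro ys (ex_intro u (ex_intro al H))) := HK n in
            ex_intro _ (xs, ys, u, al) H).
by exists (fun n => (w n).1.1.1), (fun n => (w n).1.1.2), (fun n => (w n).1.2), (fun n => (w n).2).
Qed.

Lemma scenario_solutions_cluster (xss : nat -> 'I_I -> 'I_M -> R) (yss : nat -> 'I_I -> 'I_N -> R) :
  (forall n i, inF i (xss n i) (yss n i)) ->
  exists phi xs ys, strict_incr phi /\ (forall i, inF i (xs i) (ys i)) /\
    (forall i k, Un_cv (fun n => xss (phi n) i k) (xs i k)) /\
    (forall i q, Un_cv (fun n => yss (phi n) i q) (ys i q)).
Proof.
move=> HF; have [Bf HBf] := choice _ inF_bounded.
pose B := fsum (fun i => Rabs (Bf i)).
pose Z n (t : 'I_I * ('I_M + 'I_N)) :=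
  match t.2 with inl k => xss n t.1 k | inr q => yss n t.1 q end.
have HZ : forall n t, Rabs (Z n t) <= B.
  move=> n [i s]; have HB : Bf i <= B.
    apply: Rle_trans (Rle_abs _) _.
    by apply: (fsum_term_le _ (fun i => Rabs (Bf i))) => t; apply: Rabs_pos.
  have [Hx Hy] := HBf i _ _ (HF n i).
  by case: s => [k|q]; [apply: Rle_trans (Hx k) HB | apply: Rle_trans (Hy q) HB].
have [phi [Hphi [lZ HlZ]]] := bolzano_weierstrass_fin _ Z B HZ.
exists phi, (fun i k => lZ (i, inl k)), (fun i q => lZ (i, inr q)).
split => //; split; last split.
- move=> i; have [Hclosed _] := F_compact i.
  apply: (Hclosed (fun n s => Z (phi n) (i, s)) (fun s => lZ (i, s))) => [n|s].
    exact: HF (phi n) i.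
  exact: HlZ (i, s).
- by move=> i k; apply: (HlZ (i, inl k)).
- by move=> i q; apply: (HlZ (i, inr q)).
Qed.

Lemma outcome_cv (xn : nat -> 'I_M -> R) (yn : nat -> 'I_N -> R) x y i j :
  (forall k, Un_cv (fun n => xn n k) (x k)) -> (forall q, Un_cv (fun n => yn n q) (y q)) ->
  Un_cv (fun n => outcome (xn n) (yn n) i j) (outcome x y i j).
Proof. by move=> Hx Hy; apply: CV_plus; apply: matvec_cv. Qed.

(* The one use of the closedness axiom (A5) of the risk measure. *)
Lemma Kset_limit_feasible (i0 : 'I_I) (ks : nat -> coord -> R) al :
  (forall n, Kset (ks n)) -> (forall t, Un_cv (fun n => ks n t) (target al t)) ->
  feasible_level al.
Proof.
move=> /Kset_seq_witness [xss [yss [uu [als Hw]]]] Hcv.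
have [phi [xs [ys [Hphi [HF [Hx Hy]]]]]] := scenario_solutions_cluster xss yss (fun n => (Hw n).1).
have Hks t : Un_cv (fun n => ks (phi n) t) (target al t) := Un_cv_subseq _ _ _ Hphi (Hcv t).
have Hk n : ks (phi n) = Kpoint (xss (phi n)) (yss (phi n)) (uu (phi n)) (als (phi n)).
  exact: (Hw (phi n)).2.2.
pose xbar k := rsum (fun l => p l * xs l k).
have Hxbar i : xs i = xbar.
  apply: functional_extensionality => k.
  have Hlim : Un_cv (fun n => ks (phi n) (nonantic_co i k)) (xs i k - xbar k).
    apply: (Un_cv_ext (fun n => xss (phi n) i k - rsum (fun l => p l * xss (phi n) l k))).
      by move=> n; rewrite Hk.
    apply: CV_minus (Hx i k) _; apply: fsum_cv => l.
    exact: CV_mult (Un_cv_const _) (Hx l k).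
  by have := UL_sequence _ _ _ Hlim (Hks (nonantic_co i k)); rewrite /=; lra.
have Hacc : acceptance rho (fun i j => outcome (xs i) (ys i) i j - (v j + al)).
  have [_ [_ [_ [_ Hclosed]]]] := rho_risk.
  apply: (Hclosed (fun n ij => uu (phi n) ij.1 ij.2)
    (fun ij => outcome (xs ij.1) (ys ij.1) ij.1 ij.2 - (v ij.2 + al))) => [n|[i j] /=].
    exact: (Hw (phi n)).2.1.
  apply: (Un_cv_ext (fun n => ks (phi n) (slack_co i j) + outcome (xss (phi n) i) (yss (phi n) i) i j
                              - v j - ks (phi n) level_co)).
    by move=> n; rewrite Hk /=; ring.
  have -> : outcome (xs i) (ys i) i j - (v j + al) =
    target al (slack_co i j) + outcome (xs i) (ys i) i j - v j - target al level_co by rewrite /=; ring.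
  apply: CV_minus (Hks _); apply: CV_minus (Un_cv_const _); apply: CV_plus (Hks _) _.
  exact: outcome_cv.
have HFbar i : inF i xbar (ys i) by rewrite -(Hxbar i).
exists xbar, ys; split.
  have [Hx0 [_ [HA _]]] := HFbar i0.
  by split => //; split => [i n|]; [apply: (HFbar i).2.1 | split => // i; apply: (HFbar i).2.2.2].
apply/(rho_iff_acceptance _ _ _ rho_risk); move: Hacc; rewrite /acceptance.
by apply: rho_ext => // i j; rewrite /outcome (Hxbar i).
Qed.

Lemma Kset_far (i0 : 'I_I) P al : al < P -> (forall a, feasible_level a -> P <= a) ->
  exists d, 0 < d /\ forall k, Kset k -> d <= sqnorm (fun t => k t - target al t).
Proof.
move=> Hal HP; apply: NNPP => Hno.
have Hnear : forall n : nat, exists k, Kset k /\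
    sqnorm (fun t => k t - target al t) < / (INR n + 1) * / (INR n + 1).
  move=> n; apply: NNPP => Hn; apply: Hno.
  exists (/ (INR n + 1) * / (INR n + 1)); split; first by have := inv_INR_S_pos n; nra.
  by move=> k Hk; apply: Rnot_lt_le => Hlt; apply: Hn; exists k.
have [ks Hks] := choice _ Hnear.
have Hcv t : Un_cv (fun n => ks n t) (target al t).
  apply: (Un_cv_of_dist_le _ _ (fun n => n)) => // n.
  apply: Rabs_lt_of_sq_lt; first exact: inv_INR_S_pos.
  exact: Rle_lt_trans (sq_le_sqnorm _ (fun t => ks n t - target al t) t) (Hks n).2.
have := HP _ (Kset_limit_feasible i0 ks al (fun n => (Hks n).1) Hcv); lra.
Qed.

Section SeparatingFunctional.
Variables (a : coord -> R) (c : R).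
Hypothesis a_sep : forall k, Kset k -> c <= inner a k.

(* Lowering [u] keeps it acceptable: the coefficients on the slack block are [<= 0]. *)
Lemma sep_slack_nonpos i j : a (slack_co i j) <= 0.
Proof.
have [_ [xs [ys [u [al [HF [Hu _]]]]]]] := Kset_nonempty.
pose e (t : coord) := if t is inl (inl ij) then (if ij == (i, j) then -1 else 0) else 0.
have He : inner a e = - a (slack_co i j).
  rewrite (inner_single _ a e (slack_co i j)) /e /= ?eqxx; first ring.
  by move=> [[ij|]|] //= Hne; case: eqP => // Eij; case: Hne; rewrite Eij.
suff : 0 <= inner a e by lra.
apply: (separating_direction _ Kset a (Kpoint xs ys u al) e c a_sep) => s Hs.
exists xs, ys, (fun i' j' => u i' j' - s * (if (i', j') == (i, j) then 1 else 0)), al.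
split => //; split.
  by apply: (acceptance_mono _ _ _ rho_risk _ u) => // i' j'; case: eqP => _; lra.
by apply: functional_extensionality => -[[[i' j']|[i' k]]|[]] /=; rewrite /e /=;
  [case: eqP => _ /= | |]; ring.
Qed.

(* Shifting the level moves the slack block and the level coordinate together. *)
Lemma sep_slack_level_sum : fsum (fun i => fsum (fun j => a (slack_co i j))) + a level_co = 0.
Proof.
have [_ [xs [ys [u [al [HF [Hu _]]]]]]] := Kset_nonempty.
have dir sg : 0 <= sg * (fsum (fun i => fsum (fun j => a (slack_co i j))) + a level_co).
  pose e (t : coord) := if t is inl (inr _) then 0 else sg.
  have -> : sg * (fsum (fun i => fsum (fun j => a (slack_co i j))) + a level_co) = inner a e.
    rewrite inner_coord (fsum_zero _ (fun i => fsum (fun q => a (nonantic_co i q) * e (nonantic_co i q)))).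
      rewrite Rmult_plus_distr_l -fsum_scale /e /= Rplus_0_r; congr (_ + _); last by ring.
      by apply: fsum_ext => i; rewrite -fsum_scale; apply: fsum_ext => j; ring.
    by move=> i; apply: fsum_zero => q; rewrite /e /=; ring.
  apply: (separating_direction _ Kset a (Kpoint xs ys u al) e c a_sep) => s _.
  exists xs, ys, u, (al + s * sg); split => //; split => //.
  by apply: functional_extensionality => -[[[i j]|[i k]]|[]] /=; rewrite /e /=; ring.
by have := dir 1; have := dir (-1); lra.
Qed.

End SeparatingFunctional.

Lemma sep_level_pos a al al1 d : 0 < d -> al <= al1 -> feasible_level al1 ->
  (forall k, Kset k -> inner a (target al) + d <= inner a k) -> 0 < a level_co.
Proof.
move=> Hd Hal Hf Hsep; have := Hsep _ (Kset_target_feasible _ Hf).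
by rewrite !inner_target; nra.
Qed.

Definition dual_m (a : coord -> R) i j : R := - a (slack_co i j) / a level_co.

Definition dual_lam (a : coord -> R) i k : R :=
  (a (nonantic_co i k) / p i - rsum (fun l => a (nonantic_co l k))) / a level_co.

Lemma dual_m_in_Mf a : 0 < a level_co -> (forall i j, a (slack_co i j) <= 0) -> in_Mf (dual_m a).
Proof.
move=> Ha Hpos i j; rewrite /dual_m /Rdiv.
by apply: Rmult_le_pos; [have := Hpos i j; lra | left; apply: Rinv_0_lt_compat].
Qed.

Lemma dual_m_mass a : 0 < a level_co ->
  fsum (fun i => fsum (fun j => a (slack_co i j))) + a level_co = 0 ->
  rsum (fun i => rsum (dual_m a i)) = 1.
Proof.
move=> Ha Hsum; rewrite rsum_fsum.
rewrite (fsum_ext _ _ (fun i => -1 / a level_co * fsum (fun j => a (slack_co i j)))).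
  by rewrite fsum_scale; field_simplify; [rewrite -[X in X / _]Rplus_0_r -Hsum; field | ]; lra.
by move=> i; rewrite rsum_fsum -fsum_scale; apply: fsum_ext => j; rewrite /dual_m; field; lra.
Qed.

Lemma dual_lam_nonantic a : a level_co <> 0 ->
  forall k, rsum (fun i => p i * dual_lam a i k) = 0.
Proof.
move=> Ha k; rewrite rsum_fsum.
rewrite (fsum_ext _ _ (fun i => / a level_co * (a (nonantic_co i k) - rsum (fun l => a (nonantic_co l k)) * p i))).
  have Hp : fsum (fun i => rsum (fun l => a (nonantic_co l k)) * p i) =
            rsum (fun l => a (nonantic_co l k)).
    by rewrite fsum_scale -rsum_fsum p_sum1 Rmult_1_r.
  by rewrite fsum_scale fsum_sub Hp -rsum_fsum Rminus_diag Rmult_0_r.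
by move=> i; have Hpi := p_gt0 i; rewrite /dual_lam; field; lra.
Qed.

Lemma inner_Kpoint_level0 a xs ys u : a level_co <> 0 ->
  inner a (Kpoint xs ys u 0) = a level_co *
    (rsum (fun i => scenario_cost (dual_m a) (dual_lam a) i (xs i) (ys i))
     - rsum (fun i => dot (dual_m a i) v) - rsum (fun i => dot (dual_m a i) (u i))).
Proof.
move=> Ha; rewrite inner_coord /= Rmult_0_r Rplus_0_r.
rewrite (centered_sum_swap _ _ p (fun i k => a (nonantic_co i k)) xs).
rewrite !rsum_fsum -!fsum_sub -fsum_scale -fsum_add; apply: fsum_ext => i.
have Ej : fsum (fun j : 'I_J => a (slack_co i j) * (u i j - outcome (xs i) (ys i) i j + v j + 0)) =
  a level_co * (fsum (fun j : 'I_J => dual_m a i j * outcome (xs i) (ys i) i j)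
    - fsum (fun j : 'I_J => dual_m a i j * v j) - fsum (fun j : 'I_J => dual_m a i j * u i j)).
  by rewrite -!fsum_sub -fsum_scale; apply: fsum_ext => j; rewrite /dual_m; field.
have Eq : fsum (fun k : 'I_M => (a (nonantic_co i k) - p i * rsum (fun l => a (nonantic_co l k))) * xs i k)
  = a level_co * (p i * fsum (fun k : 'I_M => dual_lam a i k * xs i k)).
  rewrite -!fsum_scale; apply: fsum_ext => k; rewrite /dual_lam.
  by have Hpi := p_gt0 i; field; lra.
by rewrite Ej Eq /scenario_cost /dot !rsum_fsum; ring.
Qed.

Lemma Kpoint_in_Kset xs ys u al : (forall i, inF i (xs i) (ys i)) -> acceptance rho u ->
  Kset (Kpoint xs ys u al).
Proof. by move=> HF Hu; exists xs, ys, u, al. Qed.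

Lemma D2_approaches_lower_bound (i0 : 'I_I) P eps : 0 < eps ->
  (forall al, feasible_level al -> P <= al) -> (exists al, feasible_level al) ->
  exists e, D2_set p A b C W T h Q rho v e /\ ER_le (ERf (P - eps)) e.
Proof.
move=> Heps HP [al1 Hal1].
have [d [Hd Hfar]] := Kset_far i0 P (P - eps) ltac:(lra) HP.
have [a [dl [Hdl Hsep]]] := convex_separation _ Kset _ d Kset_convex Kset_nonempty Hd Hfar.
have Hlev : 0 < a level_co.
  by apply: (sep_level_pos a (P - eps) al1 dl) => //; have := HP _ Hal1; lra.
exists (D2val (dual_m a) (dual_lam a)); split.
  exists (dual_m a), (dual_lam a); split; [|split; [|split]] => //.
  - by apply: dual_m_in_Mf => // i j; apply: (sep_slack_nonpos a _ Hsep).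
  - exact: dual_m_mass (sep_slack_level_sum a _ Hsep).
  - by apply: dual_lam_nonantic; lra.
apply: D2val_ge => xs ys u HF Hu.
have := Hsep _ (Kpoint_in_Kset xs ys u 0 HF Hu).
rewrite inner_target inner_Kpoint_level0; last lra.
by move=> H; apply: (Rmult_le_reg_l (a level_co)) => //; lra.
Qed.

End TwoStage.

Theorem theorem5p6
  (I J M N K L : nat) (HI : (2 <= I)%nat) (HJ : (1 <= J)%nat)
  (p : 'I_I -> R) (Hp : forall i, 0 < p i) (Hp1 : rsum p = 1)
  (A : 'I_K -> 'I_M -> R) (b : 'I_K -> R) (C : 'I_J -> 'I_M -> R)
  (W : 'I_I -> 'I_L -> 'I_N -> R) (T : 'I_I -> 'I_L -> 'I_M -> R)
  (h : 'I_I -> 'I_L -> R) (Q : 'I_I -> 'I_J -> 'I_N -> R)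
  (rho : ('I_I -> 'I_J -> R) -> ('I_J -> R) -> Prop)
  (Hrho : is_mv_convex_risk_measure rho)
  (HXne : exists x y, inX A b W T h x y)
  (HXc : compact_set (fun f : 'I_M + ('I_I * 'I_N) -> R =>
            inX A b W T h (fun k => f (inl k)) (fun i n => f (inr (i, n)))))
  (HFne : forall i, exists x y, inF A b W T h i x y)
  (HFc : forall i, compact_set (fun f : 'I_M + 'I_N -> R =>
            inF A b W T h i (fun k => f (inl k)) (fun n => f (inr n))))
  (v : 'I_J -> R) :
  exists P2 : ER,
    is_inf_ER (P2_set A b C W T h Q rho v) P2 /\
    is_sup_ER (D1_set p A b C W T h Q rho v) P2 /\
    is_sup_ER (D2_set p A b C W T h Q rho v) P2.
Proof.
have i0 : 'I_I by exists 0%nat; lia.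
have feasible : exists al, feasible_level A b C W T h Q rho v al.
  exact: feasible_level_exists.
case: (no_duality_gap (feasible_level A b C W T h Q rho v) (D2_set p A b C W T h Q rho v)
  feasible) => [e al|P eps HP Heps|P2 [Hinf Hsup]].
- exact: D2_le_feasible_level.
- exact: D2_approaches_lower_bound.
exists P2; split; [|split] => //.
- by apply: is_inf_ER_equiv Hinf => e; apply: P2_set_iff.
- by apply: is_sup_ER_equiv Hsup => e; apply: D1_iff_D2.
Qed.
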